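(* Let $\Lambda>2$ be real. Then the equation $(1+\rho)^{\Lambda+1}=4(1-\rho+2\rho^2)^{\Lambda-1}$ has a unique solution $\rho^{\star\star}_\Lambda$ in the interval $(0,1)$, and for $\rho\in(0,1)$ the following are equivalent: (a) $(1+\rho)^{\Lambda+1}\le4(1-\rho+2\rho^2)^{\Lambda-1}$; (b) $\rho\le\rho^{\star\star}_\Lambda$. *)

(* real exponents via Rpower (bases here are positive). *)
From Stdlib Require Export Reals.
Open Scope R_scope.

Definition lhs8 (L rho : R) : R := Rpower (1 + rho) (L + 1).
Definition rhs8 (L rho : R) : R := 4 * Rpower (1 - rho + 2 * rho ^ 2) (L - 1).

(* Taking logarithms, lhs8 L rho <= rhs8 L rho is equivalent to F rho <= 0 for
     F rho = (L+1) ln(1+rho) - ln 4 - (L-1) ln q(rho),   q(rho) = 1 - rho + 2 rho^2,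
   and equality of the two sides to F rho = 0.  We have F 0 = -ln 4 < 0 and
   F 1 = 0, and F' = g / ((1+rho) q) where g is the quadratic
     g(rho) = (6 - 2L) rho^2 + (2 - 4L) rho + 2L.
   For L > 2 this quadratic changes sign exactly once on [0,1], at some c, so F
   is strictly increasing on [0,c] and strictly decreasing on [c,1]. *)

From Stdlib Require Import Reals Lra Psatz.
From Coquelicot Require Import Coquelicot.
Open Scope R_scope.

Lemma deriv_pos_increasing (f f' : R -> R) (a b : R) :
  (forall x, a <= x <= b -> derivable_pt_lim f x (f' x)) ->
  (forall x, a < x < b -> 0 < f' x) ->
  forall x y, a <= x -> x < y -> y <= b -> f x < f y.
Proof.
  intros hder hpos x y hx hxy hy.
  destruct (MVT_cor2 f f' x y hxy) as [z [hmvt hz]].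
  { intros z hz; apply hder; lra. }
  pose proof (hpos z ltac:(lra)); nra.
Qed.

Lemma deriv_neg_decreasing (f f' : R -> R) (a b : R) :
  (forall x, a <= x <= b -> derivable_pt_lim f x (f' x)) ->
  (forall x, a < x < b -> f' x < 0) ->
  forall x y, a <= x -> x < y -> y <= b -> f y < f x.
Proof.
  intros hder hneg x y hx hxy hy.
  destruct (MVT_cor2 f f' x y hxy) as [z [hmvt hz]].
  { intros z hz; apply hder; lra. }
  pose proof (hneg z ltac:(lra)); nra.
Qed.

(* A quadratic A x^2 + B x + C, positive at 0 and negative at 1, whose
   "secant slope" A (x + y) + B is negative on [0,1]^2 (i.e. B < 0 and
   2A + B < 0), changes sign exactly once on [0,1]. *)
Lemma quadratic_sign_change (A B C : R) :
  0 < C -> A + B + C < 0 -> B < 0 -> 2 * A + B < 0 ->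
  exists c, 0 < c < 1 /\
    (forall x, 0 <= x < c -> 0 < A * x ^ 2 + B * x + C) /\
    (forall x, c < x <= 1 -> A * x ^ 2 + B * x + C < 0).
Proof.
  intros hC hsum hB h2AB.
  set (g := fun x => A * x ^ 2 + B * x + C).
  assert (hcont : continuity (fun x => - g x)) by (unfold g; reg).
  destruct (IVT (fun x => - g x) 0 1 hcont) as [c [hc hgc]];
    [lra | unfold g; lra | unfold g; lra |].
  assert (hfactor : forall x, g x = (x - c) * (A * (x + c) + B)).
  { intros x; assert (g c = 0) by lra; unfold g in *; nra. }
  assert (hslope : forall x, 0 <= x <= 1 -> A * (x + c) + B < 0).
  { intros x hx; destruct (Rle_or_lt 0 A); nra. }
  assert (hc0 : c <> 0) by (intros ->; unfold g in hgc; lra).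
  assert (hc1 : c <> 1) by (intros ->; unfold g in hgc; lra).
  exists c; split; [lra | split]; intros x hx; fold (g x); rewrite hfactor;
    pose proof (hslope x ltac:(lra)); nra.
Qed.

Section UnimodalRoot.

Variables (f : R -> R) (a b c : R).
Hypothesis a_lt_c : a < c.
Hypothesis c_lt_b : c < b.
Hypothesis f_cont : forall x, a <= x <= c -> continuity_pt f x.
Hypothesis f_incr : forall x y, a <= x -> x < y -> y <= c -> f x < f y.
Hypothesis f_decr : forall x y, c <= x -> x < y -> y <= b -> f y < f x.
Hypothesis fa_neg : f a < 0.
Hypothesis fb_zero : f b = 0.

Lemma unimodal_root :
  exists r, a < r < b /\ f r = 0 /\
    forall x, a < x < b -> (f x <= 0 <-> x <= r) /\ (f x < 0 <-> x < r).
Proof.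
  assert (fc_pos : 0 < f c) by (pose proof (f_decr c b); lra).
  destruct (Ranalysis5.IVT_interv f a c f_cont a_lt_c fa_neg fc_pos)
    as [r [hr fr]].
  assert (r_ne_a : r <> a) by (intros ->; lra).
  assert (r_ne_c : r <> c) by (intros ->; lra).
  exists r; split; [lra | split; [exact fr |]].
  intros x hx; destruct (Rle_or_lt x c) as [hxc | hxc].
  - destruct (Rtotal_order x r) as [hxr | [-> | hxr]].
    + pose proof (f_incr x r ltac:(lra) hxr ltac:(lra)); lra.
    + lra.
    + pose proof (f_incr r x ltac:(lra) hxr hxc); lra.
  - pose proof (f_decr x b ltac:(lra) ltac:(lra) ltac:(lra)); lra.
Qed.

End UnimodalRoot.

Definition q8 (r : R) : R := 1 - r + 2 * r ^ 2.

Lemma q8_pos (r : R) : 0 < q8 r.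
Proof. unfold q8; nra. Qed.

(* log(rhs/lhs) with the sign reversed: lhs <= rhs iff F <= 0. *)
Definition F8 (L r : R) : R := (L + 1) * ln (1 + r) - ln 4 - (L - 1) * ln (q8 r).

(* Numerator of F' over the positive denominator (1 + r) q(r). *)
Definition g8 (L r : R) : R := (6 - 2 * L) * r ^ 2 + (2 - 4 * L) * r + 2 * L.

Lemma exp_le_iff (x y : R) : exp x <= exp y <-> x <= y.
Proof.
  split; intros h.
  - destruct (Rle_or_lt x y) as [| hyx]; [assumption |].
    pose proof (exp_increasing y x hyx); lra.
  - destruct h as [hxy | ->]; [left; apply exp_increasing |]; lra.
Qed.

Lemma sides_as_exp (L r : R) :
  lhs8 L r = exp ((L + 1) * ln (1 + r)) /\
  rhs8 L r = exp ((L + 1) * ln (1 + r) - F8 L r).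
Proof.
  split; [reflexivity |].
  unfold rhs8, Rpower, F8.
  replace ((L + 1) * ln (1 + r) - ((L + 1) * ln (1 + r) - ln 4 - (L - 1) * ln (q8 r)))
    with (ln 4 + (L - 1) * ln (q8 r)) by ring.
  rewrite exp_plus, exp_ln by lra; reflexivity.
Qed.

Lemma le_iff_F8 (L r : R) : lhs8 L r <= rhs8 L r <-> F8 L r <= 0.
Proof.
  destruct (sides_as_exp L r) as [-> ->]; rewrite exp_le_iff; lra.
Qed.

Lemma eq_iff_F8 (L r : R) : lhs8 L r = rhs8 L r <-> F8 L r = 0.
Proof.
  destruct (sides_as_exp L r) as [-> ->]; split; intros h.
  - apply exp_inv in h; lra.
  - f_equal; lra.
Qed.

Lemma F8_derive (L r : R) : 0 <= r ->
  derivable_pt_lim (F8 L) r (g8 L r / ((1 + r) * q8 r)).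
Proof.
  intros hr; apply is_derive_Reals; unfold F8, g8.
  pose proof (q8_pos r) as hq; unfold q8 in *.
  auto_derive; [repeat split; lra | field; lra].
Qed.

Lemma F8_at_0 (L : R) : F8 L 0 = - ln 4.
Proof.
  unfold F8, q8; replace (1 + 0) with 1 by ring;
    replace (1 - 0 + 2 * 0 ^ 2) with 1 by ring; rewrite ln_1; ring.
Qed.

Lemma F8_at_1 (L : R) : F8 L 1 = 0.
Proof.
  unfold F8, q8; replace (1 + 1) with 2 by ring;
    replace (1 - 1 + 2 * 1 ^ 2) with 2 by ring.
  replace 4 with (2 * 2) by ring; rewrite ln_mult by lra; ring.
Qed.

Lemma F8_unimodal (L : R) : 2 < L ->
  exists c, 0 < c < 1 /\
    (forall x y, 0 <= x -> x < y -> y <= c -> F8 L x < F8 L y) /\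
    (forall x y, c <= x -> x < y -> y <= 1 -> F8 L y < F8 L x).
Proof.
  intros hL.
  destruct (quadratic_sign_change (6 - 2 * L) (2 - 4 * L) (2 * L))
    as [c [hc [gpos gneg]]]; try lra.
  assert (denom_pos : forall x, 0 <= x -> 0 < (1 + x) * q8 x).
  { intros x hx; pose proof (q8_pos x); nra. }
  set (dF := fun x => g8 L x / ((1 + x) * q8 x)).
  exists c; split; [exact hc | split].
  - apply (deriv_pos_increasing _ dF 0 c); [intros x hx; apply F8_derive; lra |].
    intros x hx; unfold dF; apply Rdiv_lt_0_compat; [apply gpos | apply denom_pos]; lra.
  - apply (deriv_neg_decreasing _ dF c 1); [intros x hx; apply F8_derive; lra |].
    intros x hx; unfold dF, Rdiv; apply Rmult_neg_pos;
      [apply gneg | apply Rinv_0_lt_compat, denom_pos]; lra.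
Qed.

Lemma ln4_pos : 0 < ln 4.
Proof. rewrite <- ln_1; apply ln_increasing; lra. Qed.

Theorem lemma8p3 (L : R) (hL : 2 < L) :
  exists rss : R,
    (0 < rss < 1 /\ lhs8 L rss = rhs8 L rss) /\
    (forall r : R, 0 < r < 1 -> lhs8 L r = rhs8 L r -> r = rss) /\
    (forall rho : R, 0 < rho < 1 -> (lhs8 L rho <= rhs8 L rho <-> rho <= rss)).
Proof.
  destruct (F8_unimodal L hL) as [c [hc [F_incr F_decr]]].
  assert (F_cont : forall x, 0 <= x <= c -> continuity_pt (F8 L) x).
  { intros x hx; apply derivable_continuous_pt; eexists; apply F8_derive; lra. }
  assert (F0_neg : F8 L 0 < 0) by (rewrite F8_at_0; pose proof ln4_pos; lra).
  destruct (unimodal_root (F8 L) 0 1 c ltac:(lra) ltac:(lra) F_cont F_incr F_decr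
              F0_neg (F8_at_1 L)) as [r [hr [Fr sign]]].
  exists r; split; [| split].
  - split; [exact hr | apply eq_iff_F8, Fr].
  - (* a zero x of F satisfies x <= r (F x <= 0) and not x < r (F x < 0 fails) *)
    intros x hx heq; apply eq_iff_F8 in heq.
    destruct (sign x hx) as [[le_r _] [_ lt_r]].
    pose proof (le_r ltac:(lra)); destruct (Rlt_or_le x r) as [h | h];
      [pose proof (lt_r h) |]; lra.
  - intros rho hrho; rewrite le_iff_F8; apply (sign rho hrho).
Qed.
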